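(* Let $R$ be $R_d$ or $R_{d,\mathrm{str}}$. Let $X,S\in\operatorname{rep}(Q)$, let $V\subseteq\Phi(X)$ and $W\subseteq\Phi(S)$ be $R$-submodules, and let $T\in\operatorname{Mod}(R)$. Then $\operatorname{Ext}^2_R(W,T)=0$ and $\operatorname{Ext}^2_R(T,\Phi(X)/V)=0$.
   Context: $K=\mathbb{C}$; $Q$ a finite quiver, $\operatorname{rep}(Q)$ its finite-dimensional representations, $\operatorname{Mod}(R)$ the finite-dimensional $R$-modules. For $d\geqslant1$, $Q_d$ has vertices $v(Q)\times\{1,\dots,d\}$, arrows $(i,r)\to(i,r+1)$ ($r\leqslant d-1$) and $(i,r)\to(j,r)$ for each arrow $i\to j$ of $Q$, $r\in\{1,\dots,d\}$. For $d\geqslant2$, $Q_{d,\mathrm{str}}$ has the same vertices and vertical arrows and arrows $(i,r)\to(j,r-1)$ for each arrow $i\to j$, $r\in\{2,\dots,d\}$. $R_d=KQ_d/I$, $R_{d,\mathrm{str}}=KQ_{d,\mathrm{str}}/I$ with $I$ the ideal identifying all paths with equal source and target. $\Phi:\operatorname{rep}(Q)\to\operatorname{Mod}(R)$: $\Phi(X)_{(i,r)}=X_i$, identity maps on vertical arrows, $X_{i\to j}$ on arrows coming from $i\to j$. *)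

(* Finite-dimensional modules over the bound quiver algebras
   R_d = K Q_d / I and R_{d,str} = K Q_{d,str} / I, encoded (as usual) as
   representations of Q_d resp. Q_{d,str} satisfying the relations of I.
   Linear maps are matrices acting on row vectors: x |-> x *m A. *)
From HB Require Import structures.
From mathcomp Require Import all_boot all_algebra.
From mathcomp Require Import complex reals Rstruct.
Set Implicit Arguments.
Unset Strict Implicit.
Unset Printing Implicit Defensive.
Import GRing.Theory.
Local Open Scope ring_scope.

Definition CC : fieldType := (Rdefinitions.R)[i].

Section BoundQuiver.
Variable K : fieldType.

Variables (V A : finType) (s t : A -> V).

Record qrep := QRep {
  qdim : V -> nat;
  qmap : forall a : A, 'M[K]_(qdim (s a), qdim (t a)) }.

(* Layers {1,..,d} are encoded as 0,..,d-1 (nat), all higher layers carry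
   the zero space.  [str = false] : R_d, horizontal arrows (i,r) -> (j,r);
   [str = true] : R_{d,str}, horizontal arrows (i,r+1) -> (j,r). *)
Definition lay (str : bool) (r : nat) : nat := if str then r.+1 else r.

(* Underlying data of a representation of Q_d / Q_{d,str}:
   mvert i r  : vertical arrow (i,r) -> (i,r+1),
   mhor a r   : the arrow coming from a : i -> j, namely
                (i,r) -> (j,r)   (str = false) or (i,r+1) -> (j,r) (str = true). *)
Record lrep (str : bool) := LRep {
  mdim : V -> nat -> nat;
  mvert : forall i r, 'M[K]_(mdim i r, mdim i r.+1);
  mhor : forall a r, 'M[K]_(mdim (s a) (lay str r), mdim (t a) r) }.

(* The commutativity relations generating I (all parallel paths equal). *)
Definition lcomm (d : nat) (str : bool) (mdim : V -> nat -> nat)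
    (mvert : forall i r, 'M[K]_(mdim i r, mdim i r.+1)) :
    (forall a r, 'M[K]_(mdim (s a) (lay str r), mdim (t a) r)) -> Prop :=
  match str return (forall a r, 'M[K]_(mdim (s a) (lay str r), mdim (t a) r)) -> Prop with
  | false => fun h => forall a r, (r.+1 < d)%N ->
       h a r *m mvert (t a) r = mvert (s a) r *m h a r.+1
  | true => fun h => forall a r, (r.+2 < d)%N ->
       h a r *m mvert (t a) r = mvert (s a) r.+1 *m h a r.+1
  end.

Definition is_Rmod (d : nat) (str : bool) (M : lrep str) : Prop :=
  (forall i r, (d <= r)%N -> mdim M i r = 0%N) /\
  lcomm d (@mvert str M) (@mhor str M).

Definition is_hom (str : bool) (M N : lrep str)
    (f : forall i r, 'M[K]_(mdim M i r, mdim N i r)) : Prop :=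
  (forall i r, mvert M i r *m f i r.+1 = f i r *m mvert N i r) /\
  (forall a r, mhor M a r *m f (t a) r = f (s a) (lay str r) *m mhor N a r).

Record rhom (str : bool) (M N : lrep str) := Hom {
  hmap :> forall i r, 'M[K]_(mdim M i r, mdim N i r);
  hmapP : is_hom hmap }.

Definition hinj str (M N : lrep str) (f : rhom M N) : Prop :=
  forall i r, row_free (f i r).
Definition hsurj str (M N : lrep str) (f : rhom M N) : Prop :=
  forall i r, row_full (f i r).

Definition ses str (L M N : lrep str) (f : rhom L M) (g : rhom M N) : Prop :=
  hinj f /\ hsurj g /\ forall i r, (f i r == kermx (g i r))%MS.

Definition projective (d : nat) str (P : lrep str) : Prop :=
  forall (B C : lrep str) (g : rhom B C) (f : rhom P C),
    is_Rmod d B -> is_Rmod d C -> hsurj g ->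
    exists h : rhom P B, forall i r, h i r *m g i r = f i r.

Definition Ext1_zero (d : nat) str (M N : lrep str) : Prop :=
  forall (E : lrep str) (f : rhom N E) (g : rhom E M),
    is_Rmod d E -> ses f g ->
    exists h : rhom M E, forall i r, h i r *m g i r = 1%:M.

(* Ext^2_R(M,N) = 0, via dimension shifting: Ext^2_R(M,N) = Ext^1_R(Omega M, N)
   for (any) projective presentation 0 -> Omega M -> P -> M -> 0. *)
Definition Ext2_zero (d : nat) str (M N : lrep str) : Prop :=
  forall (L P : lrep str) (f : rhom L P) (g : rhom P M),
    is_Rmod d L -> is_Rmod d P -> projective d P -> ses f g ->
    Ext1_zero d L N.

(* Resizing a matrix, padding with zeros / truncating (used to write identity
   and X_a in layers whose dimension is given by a conditional). *)
Definition mx_resize m n m' n' (B : 'M[K]_(m, n)) : 'M[K]_(m', n') :=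
  \matrix_(p < m', q < n')
    match @insub _ (fun k => (k < m)%N) 'I_m (val p),
          @insub _ (fun k => (k < n)%N) 'I_n (val q) with
    | Some p', Some q' => B p' q'
    | _, _ => 0
    end.

Definition Phi (d : nat) (str : bool) (X : qrep) : lrep str :=
  let dm := fun i r => if (r < d)%N then qdim X i else 0%N in
  @LRep str dm
    (fun i r => @mx_resize _ _ (dm i r) (dm i r.+1) (1%:M : 'M[K]_(qdim X i)))
    (fun a r => @mx_resize _ _ (dm (s a) (lay str r)) (dm (t a) r) (qmap X a)).

End BoundQuiver.

(* An extension of M by N is N ⊕ M with block lower
   triangular maps, given by a cochain (cv, ch) subject to a cocycle condition; it
   splits iff the cochain is a coboundary δu, and over a projective module every
   cocycle is a coboundary.
   If the vertical maps of M are injective, the cocycle condition at layer r can be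
   solved for layer r+1, so cocycles with quotient M lift along every epimorphism;
   hence the syzygies of M are projective and Ext^2(M, -) = 0.  Dually, if the
   vertical maps of Y are surjective, cocycles with submodule Y extend along every
   monomorphism (solving downwards from the top layer), so Ext^1(L, Y) = 0 for every
   submodule L of a projective, i.e. Ext^2(-, Y) = 0.  The vertical maps of Phi(X)
   are identities, so submodules of Phi(S) have injective vertical maps and
   quotients of Phi(X) surjective ones. *)

From Pilot Require Import Defs.
From mathcomp Require Import all_boot all_algebra.
From mathcomp Require Import zify.
Set Implicit Arguments.
Unset Strict Implicit.
Unset Printing Implicit Defensive.
Import GRing.Theory.
Local Open Scope ring_scope.

Section MatrixFacts.
Variable K : fieldType.

Lemma eqmx_kermx_mul0 m1 m2 m3 (f : 'M[K]_(m1, m2)) (g : 'M[K]_(m2, m3)) :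
  (f == kermx g)%MS -> f *m g = 0.
Proof. by case/andP => /sub_kermxP. Qed.

Lemma factor_through_full m1 m2 m3 n (f : 'M[K]_(m1, m2)) (g : 'M[K]_(m2, m3))
    (D : 'M[K]_(m2, n)) :
  row_full g -> (f == kermx g)%MS -> f *m D = 0 -> g *m (pinvmx g *m D) = D.
Proof.
move=> g_full /andP[_ ker_f] fD0.
have : (1%:M - g *m pinvmx g <= kermx g)%MS.
  by apply/sub_kermxP; rewrite mulmxBl mul1mx -mulmxA mulVpmx // mulmx1 subrr.
move/submx_trans/(_ ker_f)/submxP => [W defW].
have : (1%:M - g *m pinvmx g) *m D = 0 by rewrite defW -mulmxA fD0 mulmx0.
by rewrite mulmxBl mul1mx mulmxA => /eqP; rewrite subr_eq0 => /eqP.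
Qed.

Lemma factor_through_kermx m1 m2 m3 n (f : 'M[K]_(m1, m2)) (g : 'M[K]_(m2, m3))
    (D : 'M[K]_(n, m2)) :
  (f == kermx g)%MS -> D *m g = 0 -> D *m pinvmx f *m f = D.
Proof. by case/andP=> _ ker_f /sub_kermxP /submx_trans /(_ ker_f) /mulmxKpV. Qed.

(* The diagonal of a commutative square [Z *m b = a *m e] with [a] injective
   and [b] surjective. *)
Definition diag_fill m1 m2 n1 n2 (a : 'M[K]_(m1, m2)) (b : 'M[K]_(n1, n2))
    (Z : 'M[K]_(m1, n1)) (e : 'M[K]_(m2, n2)) : 'M[K]_(m2, n1) :=
  pinvmx a *m Z + (1%:M - pinvmx a *m a) *m e *m pinvmx b.

Section DiagFill.
Variables (m1 m2 n1 n2 : nat) (a : 'M[K]_(m1, m2)) (b : 'M[K]_(n1, n2)).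
Variables (Z : 'M[K]_(m1, n1)) (e : 'M[K]_(m2, n2)).

Lemma mul_diag_fill : row_free a -> a *m diag_fill a b Z e = Z.
Proof.
rewrite /diag_fill => /mulmxVp; move: (pinvmx a) (pinvmx b) => pa pb aK.
rewrite mulmxDr !mulmxA aK mul1mx.
by rewrite mulmxBr mulmx1 !mulmxA aK mul1mx subrr !mul0mx addr0.
Qed.

Lemma diag_fill_mul : row_full b -> Z *m b = a *m e -> diag_fill a b Z e *m b = e.
Proof.
rewrite /diag_fill => /mulVpmx; move: (pinvmx a) (pinvmx b) => pa pb bK Zb.
rewrite mulmxDl -!mulmxA bK mulmx1 Zb mulmxBl mul1mx.
by rewrite !mulmxA addrC subrK.
Qed.

End DiagFill.

Lemma row_free_lfactor m n p (B : 'M[K]_(m, n)) (C : 'M[K]_(n, p)) :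
  row_free (B *m C) -> row_free B.
Proof.
rewrite /row_free => /eqP rkBC; rewrite eqn_leq rank_leq_row.
by rewrite -{1}rkBC mxrankM_maxl.
Qed.

Lemma row_full_rfactor m n p (B : 'M[K]_(m, n)) (C : 'M[K]_(n, p)) :
  row_full (B *m C) -> row_full C.
Proof.
rewrite /row_full => /eqP rkBC; rewrite eqn_leq rank_leq_col.
by rewrite -{1}rkBC mxrankM_maxr.
Qed.

End MatrixFacts.

(** * Layer shifts *)

(* [F i (lay str r)], typed so that its target layer reads [lay str r.+1]. *)
Definition lay_mx (K : fieldType) (V : Type) (str : bool) (f g : V -> nat -> nat)
    (F : forall i r, 'M[K]_(f i r, g i r.+1)) i r :
    'M[K]_(f i (lay str r), g i (lay str r.+1)) :=
  match str return 'M[K]_(f i (lay str r), g i (lay str r.+1)) with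
  | false => F i r | true => F i r.+1 end.
Arguments lay_mx {K V} str {f g} F i r.

Section LayerShift.
Variables (K : fieldType) (V : Type) (str : bool).

Lemma lay_mx_block (f1 f2 g1 g2 : V -> nat -> nat)
    (F1 : forall i r, 'M[K]_(f1 i r, g1 i r.+1)) (F2 : forall i r, 'M[K]_(f2 i r, g1 i r.+1))
    (F3 : forall i r, 'M[K]_(f2 i r, g2 i r.+1)) i r :
  @lay_mx K V str (fun i r => f1 i r + f2 i r)%N (fun i r => g1 i r + g2 i r)%N
    (fun i r => block_mx (F1 i r) 0 (F2 i r) (F3 i r)) i r =
  block_mx (lay_mx str F1 i r) 0 (lay_mx str F2 i r) (lay_mx str F3 i r).
Proof. by case: str. Qed.

Lemma lay_mx_comm (f g : V -> nat -> nat)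
    (F : forall i r, 'M[K]_(f i r, f i r.+1)) (G : forall i r, 'M[K]_(g i r, g i r.+1))
    (H : forall i r, 'M[K]_(f i r, g i r)) :
  (forall i r, F i r *m H i r.+1 = H i r *m G i r) ->
  forall i r, lay_mx str F i r *m H i (lay str r.+1) = H i (lay str r) *m lay_mx str G i r.
Proof. by move=> FHG i r; case: str. Qed.

Lemma lay_mx_mull (f g h : V -> nat -> nat)
    (H : forall i r, 'M[K]_(f i r, g i r)) (C : forall i r, 'M[K]_(g i r, h i r.+1)) i r :
  @lay_mx K V str f h (fun i r => H i r *m C i r) i r =
  H i (lay str r) *m lay_mx str C i r.
Proof. by case: str. Qed.

Lemma lay_mx_mulr (f g h : V -> nat -> nat)
    (C : forall i r, 'M[K]_(f i r, g i r.+1)) (H : forall i r, 'M[K]_(g i r, h i r)) i r :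
  @lay_mx K V str f h (fun i r => C i r *m H i r.+1) i r =
  lay_mx str C i r *m H i (lay str r.+1).
Proof. by case: str. Qed.

Lemma lay_mx_commB (f g : V -> nat -> nat)
    (F : forall i r, 'M[K]_(f i r, f i r.+1)) (G : forall i r, 'M[K]_(g i r, g i r.+1))
    (H : forall i r, 'M[K]_(f i r, g i r)) i r :
  @lay_mx K V str f g (fun i r => F i r *m H i r.+1 - H i r *m G i r) i r =
  lay_mx str F i r *m H i (lay str r.+1) - H i (lay str r) *m lay_mx str G i r.
Proof. by case: str. Qed.

Lemma eq_lay_mx (f g : V -> nat -> nat)
    (F G : forall i r, 'M[K]_(f i r, g i r.+1)) :
  (forall i r, F i r = G i r) -> forall i r, lay_mx str F i r = lay_mx str G i r.
Proof. by move=> FG i r; case: str. Qed.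

Lemma lay_mx_free d (f : V -> nat -> nat)
    (F : forall i r, 'M[K]_(f i r, f i r.+1)) :
  (forall i r, (r.+1 < d)%N -> row_free (F i r)) ->
  forall i r, ((lay str r).+1 < d)%N -> row_free (lay_mx str F i r).
Proof. by move=> Ffree i r; case: str; apply: Ffree. Qed.

End LayerShift.

(** * Extensions and cocycles *)

Section Cochains.
Variables (K : fieldType) (V A : finType) (s t : A -> V) (d : nat) (str : bool).
Local Notation lrep := (lrep K s t str).
Local Notation layer_map M N := (forall i r, 'M[K]_(mdim M i r, mdim N i r)).
Local Notation vcochain N M := (forall i r, 'M[K]_(mdim M i r, mdim N i r.+1)).
Local Notation hcochain N M :=
  (forall a r, 'M[K]_(mdim M (s a) (lay str r), mdim N (t a) r)).

Lemma lcommP (M : lrep) :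
  lcomm d (mvert M) (mhor M) <->
  (forall a r, ((lay str r).+1 < d)%N ->
     mhor M a r *m mvert M (t a) r = lay_mx str (mvert M) (s a) r *m mhor M a r.+1).
Proof. by move: M; case: str. Qed.

Lemma lay_mx_hom (M N : lrep) (h : rhom M N) i r :
  lay_mx str (mvert M) i r *m h i (lay str r.+1) = h i (lay str r) *m lay_mx str (mvert N) i r.
Proof. by case: (hmapP h) => hv _; apply: lay_mx_comm. Qed.

Definition vert_injective (M : lrep) := forall i r, (r.+1 < d)%N -> row_free (mvert M i r).
Definition vert_surjective (M : lrep) := forall i r, (r.+1 < d)%N -> row_full (mvert M i r).

(* Maps act on row vectors, so the block lower triangular form makes [N] the
   submodule and [M] the quotient. *)
Definition ext_rep (N M : lrep) (cv : vcochain N M) (ch : hcochain N M) : lrep :=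
  @LRep K V A s t str (fun i r => (mdim N i r + mdim M i r)%N)
    (fun i r => block_mx (mvert N i r) 0 (cv i r) (mvert M i r))
    (fun a r => block_mx (mhor N a r) 0 (ch a r) (mhor M a r)).

Section Cocycle.
Variables (N M : lrep) (cv : vcochain N M) (ch : hcochain N M).

Definition cocycle_defect a r : 'M[K]_(mdim M (s a) (lay str r), mdim N (t a) r.+1) :=
  ch a r *m mvert N (t a) r + mhor M a r *m cv (t a) r
  - (lay_mx str cv (s a) r *m mhor N a r.+1 + lay_mx str (mvert M) (s a) r *m ch a r.+1).

Definition cocycle : Prop :=
  forall a r, ((lay str r).+1 < d)%N -> cocycle_defect a r = 0.

Lemma ext_Rmod : is_Rmod d N -> is_Rmod d M -> cocycle -> is_Rmod d (ext_rep cv ch).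
Proof.
move=> [dimN /lcommP commN] [dimM /lcommP commM] cocyc; split.
  by move=> i r le_dr; rewrite /= dimN // dimM.
apply/lcommP => a r lt_rd /=.
rewrite lay_mx_block !mulmx_block commN // commM // !mulmx0 !mul0mx !addr0 !add0r.
by move/eqP: (cocyc a r lt_rd); rewrite subr_eq0 => /eqP ->.
Qed.

End Cocycle.

Lemma eq_cocycle (N M : lrep) (cv cv' : vcochain N M) (ch ch' : hcochain N M) :
  (forall i r, cv i r = cv' i r) -> (forall a r, ch a r = ch' a r) ->
  cocycle cv ch -> cocycle cv' ch'.
Proof.
move=> eq_v eq_h cocyc a r lt_rd; rewrite -(cocyc a r lt_rd) /cocycle_defect.
by rewrite !eq_h eq_v (eq_lay_mx str eq_v).
Qed.

Definition cobv (M N : lrep) (u : layer_map M N) : vcochain N M :=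
  fun i r => mvert M i r *m u i r.+1 - u i r *m mvert N i r.
Definition cobh (M N : lrep) (u : layer_map M N) : hcochain N M :=
  fun a r => mhor M a r *m u (t a) r - u (s a) (lay str r) *m mhor N a r.

Definition pullv (P M N : lrep) (g : layer_map P M) (cv : vcochain N M) : vcochain N P :=
  fun i r => g i r *m cv i r.
Definition pullh (P M N : lrep) (g : layer_map P M) (ch : hcochain N M) : hcochain N P :=
  fun a r => g (s a) (lay str r) *m ch a r.

Definition pushv (M N C : lrep) (cv : vcochain N M) (b : layer_map N C) : vcochain C M :=
  fun i r => cv i r *m b i r.+1.
Definition pushh (M N C : lrep) (ch : hcochain N M) (b : layer_map N C) : hcochain C M :=
  fun a r => ch a r *m b (t a) r.

Lemma is_homP (M N : lrep) (u : layer_map M N) :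
  is_hom u <-> (forall i r, cobv u i r = 0) /\ (forall a r, cobh u a r = 0).
Proof.
rewrite /is_hom /cobv /cobh.
by split=> -[uv uh]; split=> *; apply/eqP; rewrite ?subr_eq0 ?uv ?uh // -subr_eq0 ?uv ?uh.
Qed.

Lemma cobvD (M N : lrep) (u w : layer_map M N) i r :
  cobv (fun i r => u i r + w i r) i r = cobv u i r + cobv w i r.
Proof. by rewrite /cobv mulmxDr mulmxDl opprD addrACA. Qed.

Lemma cobhD (M N : lrep) (u w : layer_map M N) a r :
  cobh (fun i r => u i r + w i r) a r = cobh u a r + cobh w a r.
Proof. by rewrite /cobh mulmxDr mulmxDl opprD addrACA. Qed.

Lemma cobvB (M N : lrep) (u w : layer_map M N) i r :
  cobv (fun i r => u i r - w i r) i r = cobv u i r - cobv w i r.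
Proof. by rewrite /cobv mulmxBr mulmxBl opprD addrACA -opprD. Qed.

Lemma cobhB (M N : lrep) (u w : layer_map M N) a r :
  cobh (fun i r => u i r - w i r) a r = cobh u a r - cobh w a r.
Proof. by rewrite /cobh mulmxBr mulmxBl opprD addrACA -opprD. Qed.

Lemma cobv_pull (P M N : lrep) (g : rhom P M) (u : layer_map M N) i r :
  pullv g (cobv u) i r = cobv (fun i r => g i r *m u i r) i r.
Proof. by case: (hmapP g) => gv _; rewrite /pullv /cobv mulmxBr !mulmxA gv. Qed.

Lemma cobh_pull (P M N : lrep) (g : rhom P M) (u : layer_map M N) a r :
  pullh g (cobh u) a r = cobh (fun i r => g i r *m u i r) a r.
Proof. by case: (hmapP g) => _ gh; rewrite /pullh /cobh mulmxBr !mulmxA gh. Qed.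

Lemma cobv_push (M N C : lrep) (u : layer_map M N) (b : rhom N C) i r :
  pushv (cobv u) b i r = cobv (fun i r => u i r *m b i r) i r.
Proof. by case: (hmapP b) => bv _; rewrite /pushv /cobv mulmxBl -!mulmxA bv. Qed.

Lemma cobh_push (M N C : lrep) (u : layer_map M N) (b : rhom N C) a r :
  pushh (cobh u) b a r = cobh (fun i r => u i r *m b i r) a r.
Proof. by case: (hmapP b) => _ bh; rewrite /pushh /cobh mulmxBl -!mulmxA bh. Qed.

Lemma defect_pull (P M N : lrep) (g : rhom P M) (cv : vcochain N M) (ch : hcochain N M) a r :
  cocycle_defect (pullv g cv) (pullh g ch) a r =
  g (s a) (lay str r) *m cocycle_defect cv ch a r.
Proof.
case: (hmapP g) => _ gh; rewrite /cocycle_defect /pullv /pullh !lay_mx_mull.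
by rewrite !mulmxA gh lay_mx_hom !mulmxBr !mulmxDr !mulmxA.
Qed.

Lemma defect_push (M N C : lrep) (b : rhom N C) (cv : vcochain N M) (ch : hcochain N M) a r :
  cocycle_defect (pushv cv b) (pushh ch b) a r =
  cocycle_defect cv ch a r *m b (t a) r.+1.
Proof.
case: (hmapP b) => bv bh; rewrite /cocycle_defect /pushv /pushh !lay_mx_mulr.
by rewrite -!mulmxA -bv -bh !mulmxBl !mulmxDl !mulmxA.
Qed.

Lemma defect_cob (M N : lrep) (u : layer_map M N) a r :
  lcomm d (mvert M) (mhor M) -> lcomm d (mvert N) (mhor N) -> ((lay str r).+1 < d)%N ->
  cocycle_defect (cobv u) (cobh u) a r = 0.
Proof.
move=> /lcommP commM /lcommP commN lt_rd; rewrite /cocycle_defect /cobv /cobh lay_mx_commB.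
rewrite !mulmxBl !mulmxBr !mulmxA commM // -!mulmxA commN //.
by apply/eqP; rewrite subr_eq0; apply/eqP; rewrite [LHS]addrC [RHS]addrC !subrKA.
Qed.

Section CocycleTransport.
Variables (N M : lrep) (cv : vcochain N M) (ch : hcochain N M).

Lemma cocycle_cob (u : layer_map M N) :
  lcomm d (mvert M) (mhor M) -> lcomm d (mvert N) (mhor N) -> cocycle (cobv u) (cobh u).
Proof. by move=> commM commN a r; apply: defect_cob. Qed.

Lemma cocycle_pull (P : lrep) (g : rhom P M) :
  cocycle cv ch -> cocycle (pullv g cv) (pullh g ch).
Proof. by move=> cocyc a r lt_rd; rewrite defect_pull cocyc ?mulmx0. Qed.

Lemma cocycle_of_pull (P : lrep) (g : rhom P M) :
  hsurj g -> cocycle (pullv g cv) (pullh g ch) -> cocycle cv ch.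
Proof.
move=> g_surj cocyc a r lt_rd; apply: (row_full_inj (g_surj (s a) (lay str r))).
by rewrite -defect_pull cocyc ?mulmx0.
Qed.

Lemma cocycle_of_push (C : lrep) (b : rhom N C) :
  hinj b -> cocycle (pushv cv b) (pushh ch b) -> cocycle cv ch.
Proof.
move=> b_inj cocyc a r lt_rd; apply: (row_free_inj (b_inj (t a) r.+1)).
by rewrite -defect_push cocyc ?mul0mx.
Qed.

End CocycleTransport.

Lemma ext_hom_cob (L N M : lrep) (cv : vcochain N M) (ch : hcochain N M)
    (h : rhom L (ext_rep cv ch)) :
  let u i r := lsubmx (h i r) in let g i r := rsubmx (h i r) in
  (forall i r, cobv u i r = pullv g cv i r) /\ (forall a r, cobh u a r = pullh g ch a r).
Proof.
case: (hmapP h) => hv hh u g; split=> [i r | a r].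
  have := hv i r; rewrite -[h i r.+1]hsubmxK -[h i r]hsubmxK mul_mx_row mul_row_block.
  by case/eq_row_mx => + _; rewrite /cobv /pullv => ->; rewrite addrC addKr.
have := hh a r; rewrite -[h (t a) r]hsubmxK -[h (s a) _]hsubmxK mul_mx_row mul_row_block.
by case/eq_row_mx => + _; rewrite /cobh /pullh => ->; rewrite addrC addKr.
Qed.

Lemma is_hom_id (M : lrep) : is_hom (M := M) (N := M) (fun i r => 1%:M).
Proof. by split=> *; rewrite mulmx1 mul1mx. Qed.

Definition rhom_id (M : lrep) : rhom M M := Defs.Hom (is_hom_id M).

Lemma projective_coboundary (P N : lrep) (cv : vcochain N P) (ch : hcochain N P) :
  projective d P -> is_Rmod d N -> is_Rmod d P -> cocycle cv ch ->
  exists u : layer_map P N,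
    (forall i r, cobv u i r = cv i r) /\ (forall a r, cobh u a r = ch a r).
Proof.
move=> P_proj N_mod P_mod cocyc.
have pr_hom : is_hom (M := ext_rep cv ch) (N := P) (fun i r => col_mx 0 1%:M).
  by split=> *; rewrite /= mul_block_col mul_col_mx !mulmx0 !mul0mx !mulmx1 !mul1mx
    !addr0 !add0r.
have pr_surj : hsurj (Defs.Hom pr_hom).
  by move=> i r; apply/row_fullP; exists (row_mx 0 1%:M); rewrite mul_row_col mulmx0 add0r mulmx1.
have [sec secK] := P_proj _ _ _ (rhom_id P) (ext_Rmod N_mod P_mod cocyc) P_mod pr_surj.
have sec_r i r : rsubmx (sec i r) = 1%:M.
  by move: (secK i r); rewrite /= -[sec i r]hsubmxK mul_row_col mulmx0 add0r mulmx1 row_mxKr.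
have [cob_v cob_h] := ext_hom_cob sec.
exists (fun i r => lsubmx (sec i r)); split=> [i r | a r].
  by rewrite cob_v /pullv sec_r mul1mx.
by rewrite cob_h /pullh sec_r mul1mx.
Qed.

End Cochains.

(** * Lifting and extending cocycles *)

Fixpoint rec_down (T : nat -> Type) (base : forall r, T r) (step : forall r, T r.+1 -> T r)
    (n r : nat) : T r :=
  if n is n'.+1 then step r (rec_down base step n' r.+1) else base r.

Section Lifting.
Variables (K : fieldType) (V A : finType) (s t : A -> V) (d : nat) (str : bool).
Local Notation lrep := (lrep K s t str).
Local Notation vcochain N M := (forall i r, 'M[K]_(mdim M i r, mdim N i r.+1)).
Local Notation hcochain N M :=
  (forall a r, 'M[K]_(mdim M (s a) (lay str r), mdim N (t a) r)).

Lemma cocycle_lift (B C M : lrep) (b : rhom B C) (cv : vcochain C M) (ch : hcochain C M) :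
  vert_injective d M -> hsurj b -> cocycle d cv ch ->
  exists (cv' : vcochain B M) (ch' : hcochain B M), cocycle d cv' ch' /\
    (forall i r, pushv cv' b i r = cv i r) /\ (forall a r, pushh ch' b a r = ch a r).
Proof.
move=> M_vinj b_surj cocyc; have [bv bh] := hmapP b.
pose cv' i r := cv i r *m pinvmx (b i r.+1).
have cv'K i r : cv' i r *m b i r.+1 = cv i r by rewrite -mulmxA mulVpmx ?mulmx1.
clearbody cv'.
pose Z a r (X : 'M_(_, mdim B (t a) r)) := X *m mvert B (t a) r + mhor M a r *m cv' (t a) r
  - lay_mx str cv' (s a) r *m mhor B a r.+1.
have Zb a r X : ((lay str r).+1 < d)%N -> X *m b (t a) r = ch a r ->
    Z a r X *m b (t a) r.+1 = lay_mx str (mvert M) (s a) r *m ch a r.+1.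
  move=> lt_rd Xb; apply/eqP; rewrite -subr_eq0 -(cocyc a r lt_rd) /cocycle_defect.
  rewrite mulmxBl mulmxDl -!mulmxA bv bh !mulmxA Xb -lay_mx_mulr.
  by rewrite (eq_lay_mx str cv'K) -[mhor M a r *m _ *m _]mulmxA cv'K opprD addrA.
(* The cocycle condition at [(a, r)] is solved for [ch' a r.+1] through the injective
   [lay_mx str (mvert M) (s a) r], keeping [ch' a r.+1] a lift of [ch a r.+1]. *)
pose step a r X := if ((lay str r).+1 < d)%N then
    diag_fill (lay_mx str (mvert M) (s a) r) (b (t a) r.+1) (Z a r X) (ch a r.+1)
  else ch a r.+1 *m pinvmx (b (t a) r.+1).
pose ch' a := nat_rect _ (ch a 0%N *m pinvmx (b (t a) 0%N)) (step a).
have ch'K a r : pushh ch' b a r = ch a r.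
  rewrite /pushh; elim: r => [|r IHr]; first by rewrite -mulmxA mulVpmx ?mulmx1.
  rewrite [ch' a r.+1]/= /step; case: ifP => [lt_rd | _]; last by rewrite -mulmxA mulVpmx ?mulmx1.
  by rewrite diag_fill_mul ?Zb.
exists cv', ch'; split=> // a r lt_rd; rewrite /cocycle_defect [ch' a r.+1]/= /step ifT //.
by rewrite mul_diag_fill ?[_ + Z _ _ _]addrC ?subrK ?subrr // (lay_mx_free M_vinj).
Qed.

Lemma cocycle_extend (L P Y : lrep) (f : rhom L P) (cv : vcochain Y L) (ch : hcochain Y L) :
  vert_surjective d Y -> hinj f -> cocycle d cv ch ->
  exists (cv' : vcochain Y P) (ch' : hcochain Y P), cocycle d cv' ch' /\
    (forall i r, pullv f cv' i r = cv i r) /\ (forall a r, pullh f ch' a r = ch a r).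
Proof.
move=> Y_vsurj f_inj cocyc; have [fv fh] := hmapP f.
pose cv' i r := pinvmx (f i r) *m cv i r.
have cv'K i r : f i r *m cv' i r = cv i r by rewrite mulmxA mulmxVp ?mul1mx.
clearbody cv'.
pose E a r (X : 'M_(mdim P (s a) (lay str r.+1), _)) := lay_mx str cv' (s a) r *m mhor Y a r.+1
  + lay_mx str (mvert P) (s a) r *m X - mhor P a r *m cv' (t a) r.
have fE a r X : ((lay str r).+1 < d)%N -> f (s a) (lay str r.+1) *m X = ch a r.+1 ->
    ch a r *m mvert Y (t a) r = f (s a) (lay str r) *m E a r X.
  move=> lt_rd fX; apply/eqP; rewrite -subr_eq0 -(cocyc a r lt_rd) /cocycle_defect.
  rewrite mulmxBr mulmxDr !mulmxA -lay_mx_mull (eq_lay_mx str cv'K) -lay_mx_hom.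
  rewrite -[lay_mx _ _ _ _ *m _ *m X]mulmxA fX -fh -[mhor L a r *m _ *m _]mulmxA cv'K.
  by rewrite opprB addrA.
(* Dually, [ch' a r] is solved from [ch' a r.+1] through the surjective
   [mvert Y (t a) r], by recursion downwards from layer [d]. *)
pose base a r := pinvmx (f (s a) (lay str r)) *m ch a r.
pose step a r X := if ((lay str r).+1 < d)%N then
    diag_fill (f (s a) (lay str r)) (mvert Y (t a) r) (ch a r) (E a r X)
  else base a r.
pose ch' a r := rec_down (base a) (step a) (d - r) r.
have f_rec a n r : f (s a) (lay str r) *m rec_down (base a) (step a) n r = ch a r.
  have f_base : f (s a) (lay str r) *m base a r = ch a r by rewrite mulmxA mulmxVp ?mul1mx.
  by case: n => [|n] //=; rewrite /step; case: ifP => // _; rewrite mul_diag_fill.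
have ch'_step a r : ((lay str r).+1 < d)%N -> ch' a r = step a r (ch' a r.+1).
  by move=> lt_rd; rewrite /ch' (_ : d - r = (d - r.+1).+1)%N //; case: str lt_rd => /=; lia.
exists cv', ch'; split; last by split=> [i r | a r]; [apply: cv'K | apply: f_rec].
move=> a r lt_rd; rewrite /cocycle_defect ch'_step // /step ifT //.
have lt_r1d : (r.+1 < d)%N by case: str lt_rd => /=; lia.
rewrite diag_fill_mul ?Y_vsurj //; last by apply: fE => //; apply: f_rec.
by apply/eqP; rewrite subr_eq0 (subrK (mhor P a r *m cv' (t a) r)).
Qed.

End Lifting.

(** * Projective and injective dimension at most one *)

Section ProjectiveDimension.
Variables (K : fieldType) (V A : finType) (s t : A -> V) (d : nat) (str : bool).
Local Notation lrep := (lrep K s t str).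
Local Notation layer_map M N := (forall i r, 'M[K]_(mdim M i r, mdim N i r)).
Local Notation vcochain N M := (forall i r, 'M[K]_(mdim M i r, mdim N i r.+1)).
Local Notation hcochain N M :=
  (forall a r, 'M[K]_(mdim M (s a) (lay str r), mdim N (t a) r)).

(* The pushout of [0 -> L -> P -> M -> 0] along [phi] is [ext_rep C M (cv, ch)];
   [u] is the [C]-component of the induced map from [P]. *)
Lemma pushout_cocycle (L P M C : lrep) (f : rhom L P) (g : rhom P M) (phi : rhom L C) :
  is_Rmod d P -> is_Rmod d C -> ses f g ->
  exists (u : layer_map P C) (cv : vcochain C M) (ch : hcochain C M),
    [/\ cocycle d cv ch, forall i r, f i r *m u i r = phi i r,
        forall i r, cobv u i r = pullv g cv i r & forall a r, cobh u a r = pullh g ch a r].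
Proof.
move=> P_mod C_mod [f_inj [g_surj ker_f]].
have [phi_v phi_h] := proj1 (is_homP phi) (hmapP phi).
pose u i r := pinvmx (f i r) *m phi i r.
have fu i r : f i r *m u i r = phi i r by rewrite mulmxA mulmxVp ?mul1mx.
clearbody u.
pose cv i r := pinvmx (g i r) *m cobv u i r.
pose ch a r := pinvmx (g (s a) (lay str r)) *m cobh u a r.
have gcv i r : cobv u i r = pullv g cv i r.
  apply/esym/(factor_through_full (g_surj i r) (ker_f i r)).
  by rewrite -[_ *m cobv u i r]/(pullv f _ _ _) cobv_pull /cobv !fu -/(cobv phi i r).
have gch a r : cobh u a r = pullh g ch a r.
  apply/esym/(factor_through_full (g_surj _ _) (ker_f _ _)).
  by rewrite -[_ *m cobh u a r]/(pullh f _ _ _) cobh_pull /cobh !fu -/(cobh phi a r).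
exists u, cv, ch; split=> //.
apply: (cocycle_of_pull g_surj); apply: (eq_cocycle gcv gch).
exact: cocycle_cob P_mod.2 C_mod.2.
Qed.

(* Every extension [0 -> Y -> E -> L -> 0] is isomorphic to some [ext_rep Y L (cv, ch)];
   [S] is a layerwise section of [p]. *)
Lemma extension_cocycle (Y E L : lrep) (j : rhom Y E) (p : rhom E L) :
  is_Rmod d L -> is_Rmod d E -> ses j p ->
  exists (S : layer_map L E) (cv : vcochain Y L) (ch : hcochain Y L),
    [/\ cocycle d cv ch, forall i r, S i r *m p i r = 1%:M,
        forall i r, cobv S i r = pushv cv j i r & forall a r, cobh S a r = pushh ch j a r].
Proof.
move=> L_mod E_mod [j_inj [p_surj ker_j]].
pose S i r := pinvmx (p i r).
have Sp i r : S i r *m p i r = 1%:M by rewrite mulVpmx.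
clearbody S.
pose cv i r := cobv S i r *m pinvmx (j i r.+1).
pose ch a r := cobh S a r *m pinvmx (j (t a) r).
have jcv i r : cobv S i r = pushv cv j i r.
  apply/esym/(factor_through_kermx (ker_j i r.+1)).
  by rewrite -[_ *m p i r.+1]/(pushv _ _ _ _) cobv_push /cobv !Sp mul1mx mulmx1 subrr.
have jch a r : cobh S a r = pushh ch j a r.
  apply/esym/(factor_through_kermx (ker_j _ _)).
  by rewrite -[_ *m p _ _]/(pushh _ _ _ _) cobh_push /cobh !Sp mul1mx mulmx1 subrr.
exists S, cv, ch; split=> //.
apply: (cocycle_of_push j_inj); apply: (eq_cocycle jcv jch).
exact: cocycle_cob L_mod.2 E_mod.2.
Qed.

Lemma projective_syzygy (L P M : lrep) (f : rhom L P) (g : rhom P M) :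
  is_Rmod d P -> projective d P -> ses f g -> vert_injective d M -> projective d L.
Proof.
move=> P_mod P_proj fg M_vinj B C b phi B_mod C_mod b_surj.
have [u [cv [ch [cocyc fu ucv uch]]]] := pushout_cocycle phi P_mod C_mod fg.
have [cv' [ch' [cocyc' [cv'K ch'K]]]] := cocycle_lift M_vinj b_surj cocyc.
have [w [wv wh]] := projective_coboundary P_proj B_mod P_mod (cocycle_pull g cocyc').
have D_hom : is_hom (fun i r => u i r - w i r *m b i r).
  apply/is_homP; split=> [i r | a r].
    by rewrite cobvB -cobv_push /pushv wv ucv /pullv -(cv'K i r) /pushv mulmxA subrr.
  by rewrite cobhB -cobh_push /pushh wh uch /pullh -(ch'K a r) /pushh mulmxA subrr.
have [D DK] := P_proj _ _ b (Defs.Hom D_hom) B_mod C_mod b_surj.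
have [D_v D_h] := proj1 (is_homP D) (hmapP D).
have [_ [_ ker_f]] := fg.
have psi_hom : is_hom (fun i r => f i r *m (w i r + D i r)).
  apply/is_homP; split=> [i r | a r].
    rewrite -cobv_pull /pullv cobvD wv D_v addr0 /pullv mulmxA.
    by rewrite (eqmx_kermx_mul0 (ker_f i r)) mul0mx.
  rewrite -cobh_pull /pullh cobhD wh D_h addr0 /pullh mulmxA.
  by rewrite (eqmx_kermx_mul0 (ker_f _ _)) mul0mx.
exists (Defs.Hom psi_hom) => i r /=.
by rewrite -mulmxA mulmxDl DK /= addrC subrK fu.
Qed.

Lemma Ext1_zero_sub_projective (L P Y : lrep) (f : rhom L P) :
  is_Rmod d L -> is_Rmod d P -> projective d P -> hinj f -> is_Rmod d Y ->
  vert_surjective d Y -> Ext1_zero d L Y.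
Proof.
move=> L_mod P_mod P_proj f_inj Y_mod Y_vsurj E j p E_mod jp.
have [S [cv [ch [cocyc Sp Scv Sch]]]] := extension_cocycle L_mod E_mod jp.
have [cv' [ch' [cocyc' [cv'K ch'K]]]] := cocycle_extend Y_vsurj f_inj cocyc.
have [w [wv wh]] := projective_coboundary P_proj Y_mod P_mod cocyc'.
have sec_hom : is_hom (fun i r => S i r - f i r *m w i r *m j i r).
  apply/is_homP; split=> [i r | a r].
    rewrite cobvB -cobv_push /pushv -cobv_pull /pullv wv -/(pullv f cv' i r) cv'K.
    by rewrite Scv subrr.
  rewrite cobhB -cobh_push /pushh -cobh_pull /pullh wh -/(pullh f ch' a r) ch'K.
  by rewrite Sch subrr.
have [_ [_ ker_j]] := jp.
exists (Defs.Hom sec_hom) => i r /=.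
by rewrite mulmxBl Sp -[_ *m j i r *m _]mulmxA (eqmx_kermx_mul0 (ker_j i r)) mulmx0 subr0.
Qed.

Lemma Ext1_zero_projective (P N : lrep) : projective d P -> is_Rmod d P -> Ext1_zero d P N.
Proof.
move=> P_proj P_mod E f p E_mod [_ [p_surj _]].
by have [h hK] := P_proj _ _ p (rhom_id P) E_mod P_mod p_surj; exists h.
Qed.

Lemma Ext2_zero_vert_injective (M N : lrep) : vert_injective d M -> Ext2_zero d M N.
Proof.
move=> M_vinj L P f g L_mod P_mod P_proj fg; apply: Ext1_zero_projective L_mod.
exact: projective_syzygy P_mod P_proj fg M_vinj.
Qed.

Lemma Ext2_zero_vert_surjective (T Y : lrep) :
  is_Rmod d Y -> vert_surjective d Y -> Ext2_zero d T Y.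
Proof.
move=> Y_mod Y_vsurj L P f g L_mod P_mod P_proj [f_inj _].
exact: Ext1_zero_sub_projective L_mod P_mod P_proj f_inj Y_mod Y_vsurj.
Qed.

Lemma vert_injective_sub (W M : lrep) (j : rhom W M) :
  hinj j -> vert_injective d M -> vert_injective d W.
Proof.
move=> j_inj M_vinj i r lt_rd; apply: (row_free_lfactor (C := j i r.+1)).
by case: (hmapP j) => -> _; rewrite /row_free mxrankMfree ?M_vinj //; apply: j_inj.
Qed.

Lemma vert_surjective_quot (M Y : lrep) (p : rhom M Y) :
  hsurj p -> vert_surjective d M -> vert_surjective d Y.
Proof.
move=> p_surj M_vsurj i r lt_rd; apply: (row_full_rfactor (B := p i r)).
by case: (hmapP p) => pv _; rewrite /row_full -pv (eqmxMfull _ (M_vsurj i r lt_rd)); apply: p_surj.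
Qed.

End ProjectiveDimension.

Section Phi.
Variables (K : fieldType) (V A : finType) (s t : A -> V) (d : nat) (str : bool).

Lemma mx_resize_id m n (B : 'M[K]_(m, n)) : mx_resize m n B = B.
Proof.
apply/matrixP => i j; rewrite /mx_resize mxE.
case: insubP => [i' _ ei|]; last by rewrite ltn_ord.
case: insubP => [j' _ ej|]; last by rewrite ltn_ord.
by rewrite (val_inj ei) (val_inj ej).
Qed.

Lemma vert_injective_Phi (X : qrep K s t) : vert_injective d (Phi d str X).
Proof.
move=> i r lt_rd; rewrite /= !ifT ?(ltnW lt_rd) // mx_resize_id.
by rewrite row_free_unit unitmx1.
Qed.

Lemma vert_surjective_Phi (X : qrep K s t) : vert_surjective d (Phi d str X).
Proof.
move=> i r lt_rd; rewrite /= !ifT ?(ltnW lt_rd) // mx_resize_id.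
by rewrite row_full_unit unitmx1.
Qed.

End Phi.

Unset Implicit Arguments.
Local Close Scope ring_scope.

Theorem lemma2p18 (V0 A0 : finType) (s t : A0 -> V0) (str : bool) (d : nat)
  (hd : (if str then 2 <= d else 1 <= d)%N)
  (X S : qrep CC s t)
  (Vsub W T Y : lrep CC s t str)
  (iV : rhom Vsub (Phi d str X)) (iW : rhom W (Phi d str S))
  (pY : rhom (Phi d str X) Y) :
  is_Rmod d Vsub -> is_Rmod d W -> is_Rmod d T -> is_Rmod d Y ->
  hinj iV -> hinj iW -> ses iV pY ->
  Ext2_zero d W T /\ Ext2_zero d T Y.
Proof.
move=> _ _ _ Y_mod _ iW_inj [_ [pY_surj _]]; split.
  exact/Ext2_zero_vert_injective/(vert_injective_sub iW_inj)/vert_injective_Phi.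
apply: Ext2_zero_vert_surjective => //.
exact/(vert_surjective_quot pY_surj)/vert_surjective_Phi.
Qed.
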